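(* (i) If $(\mathbf A,\mathbf b)\in\mathbb C^{m\times(d+1)}$ is affine phase retrievable for $\mathbb C^d$, then $m\ge 3d$. (ii) Let $B=(\mathbf a_1,\ldots,\mathbf a_d)\in\mathbb C^{d\times d}$ be nonsingular and set $\mathbf A=(B,B,B)^\top\in\mathbb C^{3d\times d}$. Let $\mathbf b=(b_{11},\ldots,b_{d1},b_{12},\ldots,b_{d2},b_{13},\ldots,b_{d3})^\top\in\mathbb C^{3d}$ be such that for each $1\le j\le d$ the points $b_{j1},b_{j2},b_{j3}$ are not collinear in $\mathbb C$. Then $(\mathbf A,\mathbf b)$ is affine phase retrievable for $\mathbb C^d$.
   Context: For $\mathbf u,\mathbf v\in\mathbb C^d$, $\langle\mathbf u,\mathbf v\rangle=\sum_i\overline{u_i}v_i$. A pair $(\mathbf A,\mathbf b)$ with $\mathbf A=(\mathbf a_1,\ldots,\mathbf a_m)^\top\in\mathbb C^{m\times d}$ and $\mathbf b=(b_1,\ldots,b_m)^\top\in\mathbb C^m$ (viewed as a matrix in $\mathbb C^{m\times(d+1)}$) is called affine phase retrievable for $\mathbb C^d$ if the map $\mathbf x\mapsto(|\langle\mathbf a_1,\mathbf x\rangle+b_1|,\ldots,|\langle\mathbf a_m,\mathbf x\rangle+b_m|)$ is injective on $\mathbb C^d$. *)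

From HB Require Import structures.
From mathcomp Require Import all_boot all_order all_algebra.
From mathcomp Require Import complex reals.
Set Implicit Arguments. Unset Strict Implicit. Unset Printing Implicit Defensive.
Import Order.TTheory GRing.Theory Num.Theory.
Local Open Scope ring_scope.
Local Open Scope complex_scope.

Definition cinner (R : realType) (d : nat) (u v : 'cV[R[i]]_d) : R[i] :=
  \sum_(k < d) (u k ord0)^* * v k ord0.

Definition affine_meas (R : realType) (m d : nat)
    (A : 'M[R[i]]_(m, d)) (b : 'cV[R[i]]_m) (x : 'cV[R[i]]_d) : 'cV[R[i]]_m :=
  \col_(k < m) `| cinner (row k A)^T x + b k ord0 |.

Definition affine_phase_retrievable (R : realType) (m d : nat)
    (A : 'M[R[i]]_(m, d)) (b : 'cV[R[i]]_m) : Prop :=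
  injective (affine_meas A b).

Definition collinear (R : realType) (z1 z2 z3 : R[i]) : Prop :=
  exists (p w : R[i]) (t1 t2 t3 : R), w != 0 /\
    z1 = p + t1%:C * w /\ z2 = p + t2%:C * w /\ z3 = p + t3%:C * w.

From HB Require Import structures.
From mathcomp Require Import all_boot all_order all_algebra.
From mathcomp Require Import complex reals ring lra zify.
Set Implicit Arguments. Unset Strict Implicit. Unset Printing Implicit Defensive.
Import Order.TTheory GRing.Theory Num.Theory.
Local Open Scope ring_scope.
Local Open Scope complex_scope.

(* (i) When the conjugated rows of A span C^d, choose z annihilating d of the
   affine forms <a_j, z> + b_j.  Then z + w and z - w have the same
   measurements as soon as Re (conj (<a_j, z> + b_j) <a_j, w>) = 0 for all j;
   only m - d of these real linear conditions on w in C^d = R^(2d) are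
   nontrivial, so a nonzero w exists if m < 3d.  If the rows do not span, a
   kernel vector w of the forms works with z = 0.
   (ii) If the k-th coordinates u <> v of B^* x and B^* y differed, the three
   points b_k1, b_k2, b_k3 would be equidistant from -u and -v, hence would
   lie on the perpendicular bisector. *)

Section ComplexPlane.
Variable R : rcfType.
Implicit Types (u v c e : R[i]).

Lemma eq_normc u v : `|u| = `|v| <->
  complex.Re u ^+ 2 + complex.Im u ^+ 2 = complex.Re v ^+ 2 + complex.Im v ^+ 2.
Proof.
split=> [huv|huv]; first by apply: (@complexI R); rewrite !add_Re2_Im2 huv.
by apply/eqP; rewrite -(eqrXn2 (n := 2)) // -!add_Re2_Im2 huv.
Qed.

Lemma eq_normcD_Re u v c : `|u + c| = `|v + c| ->
  complex.Re ((u - v)^* * c) = complex.Re (v * v^* - u * u^*) / 2.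
Proof.
by case: u v c => [u1 u2] [v1 v2] [c1 c2] /eq_normc; simpc => /= h; lra.
Qed.

Lemma normcD_eq_normcB u c : complex.Re (u^* * c) = 0 -> `|u + c| = `|u - c|.
Proof.
by case: u c => [u1 u2] [c1 c2] h; apply/eq_normc; move: h; simpc => /= h; lra.
Qed.

Lemma complex_line_decomp e c : e != 0 ->
  let n := complex.Re e ^+ 2 + complex.Im e ^+ 2 in
  c = (complex.Re (e^* * c) / n)%:C * e + (complex.Im (e^* * c) / n)%:C * ('i * e).
Proof.
case: e c => [a b] [x y] /= ne0.
have n0 : a ^+ 2 + b ^+ 2 != 0.
  by apply: contra ne0; rewrite paddr_eq0 ?sqr_ge0 // !sqrf_eq0 => /andP[/eqP-> /eqP->].
by simpc; apply/eqP; rewrite eq_complex /=; apply/andP; split; apply/eqP; field.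
Qed.
End ComplexPlane.

Lemma mxrank_colsub_eq0 (F : fieldType) n m d (K : 'M[F]_(n, m)) (f : 'I_d -> 'I_m) :
  injective f -> colsub f K = 0 -> (\rank K + d <= m)%N.
Proof.
move=> injf Kf0; set Q : 'M[F]_(m, d) := colsub f 1%:M.
have rQ : \rank Q = d.
  have QtQ : rowsub f 1%:M *m Q = 1%:M.
    by apply/matrixP => k l; rewrite mulmx_colsub mulmx1 !mxE (inj_eq injf).
  apply/eqP; rewrite eqn_leq rank_leq_col -{1}(mxrank1 F d) -QtQ.
  exact: mxrankM_maxr.
by have := mxrank_mul_min K Q; rewrite mulmx_colsub mulmx1 Kf0 mxrank0 rQ; lia.
Qed.

Lemma affine_root_of_row_full (F : fieldType) m n (A : 'M[F]_(m, n)) (b : 'cV_m)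
    (full : row_full A) :
  exists z, forall k, (A *m z + b) (fullrankfun full k) 0 = 0.
Proof.
set f := fullrankfun full; have uS : rowsub f A \in unitmx := fullrowsub_unit full.
set z := - (invmx (rowsub f A) *m rowsub f b); exists z => k.
have : rowsub f (A *m z + b) = 0.
  by rewrite rowsubE mulmxDr mulmxA -!rowsubE mulmxN mulKVmx // addNr.
by move/matrixP/(_ k 0); rewrite !mxE.
Qed.

Lemma not_row_full_ker (F : fieldType) m n (A : 'M[F]_(m, n)) :
  ~~ row_full A -> exists2 w : 'cV_n, w != 0 & A *m w = 0.
Proof.
rewrite /row_full -mxrank_tr -[_ == n]/(row_free A^T) -kermx_eq0.
case/rowV0Pn => v /sub_kermxP vA0 v0.
by exists v^T; rewrite ?trmx_eq0 // -[A]trmxK -trmx_mul vA0 trmx0.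
Qed.

Section Realification.
Variable R : rcfType.

(* The real matrix of w |-> Re (C *m w), acting on the row (Re w, Im w). *)
Definition remx m d (C : 'M[R[i]]_(m, d)) : 'M[R]_(d + d, m) :=
  col_mx (\matrix_(k, j) complex.Re (C j k)) (\matrix_(k, j) - complex.Im (C j k)).

Definition cV_of_parts d (p : 'rV[R]_(d + d)) : 'cV[R[i]]_d :=
  \col_k (lsubmx p 0 k +i* rsubmx p 0 k).

Lemma mul_remx m d (C : 'M[R[i]]_(m, d)) p j :
  (p *m remx C) 0 j = complex.Re ((C *m cV_of_parts p) j 0).
Proof.
rewrite -[p]hsubmxK mul_row_col hsubmxK !mxE raddf_sum -big_split /=.
apply: eq_bigr => k _; rewrite !mxE.
by case: (C j k) => a b; simpc => /=; ring.
Qed.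

Lemma cV_of_parts_eq0 d (p : 'rV[R]_(d + d)) : (cV_of_parts p == 0) = (p == 0).
Proof.
apply/eqP/eqP => [/matrixP p0|->]; last first.
  by apply/matrixP => k l; rewrite !mxE.
rewrite -[p]hsubmxK; apply/matrixP => i k; rewrite (ord1 i) mxE.
by case: split_ordP => k' ->; rewrite ?row_mxEl ?row_mxEr;
  have := p0 k' 0; rewrite !mxE => -[].
Qed.

Lemma exists_Re_mulmx_eq0 m d (C : 'M[R[i]]_(m, d)) (f : 'I_d -> 'I_m) :
  injective f -> (forall k l, C (f k) l = 0) -> (m < 3 * d)%N ->
  exists2 w : 'cV[R[i]]_d, w != 0 & forall j, complex.Re ((C *m w) j 0) = 0.
Proof.
move=> injf Cf0 ltm.
have : (\rank (remx C) + d <= m)%N.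
  apply: mxrank_colsub_eq0 injf _; apply/matrixP => i k; rewrite mxE [RHS]mxE.
  by case: (split_ordP i) => i' ->; rewrite ?col_mxEu ?col_mxEd !mxE Cf0 ?oppr0.
move=> rK; have : ~~ row_free (remx C) by rewrite /row_free; lia.
rewrite -kermx_eq0 => /rowV0Pn[p /sub_kermxP pK0 p0].
exists (cV_of_parts p); first by rewrite cV_of_parts_eq0.
by move=> j; rewrite -mul_remx pK0 mxE.
Qed.
End Realification.

Section AffinePhaseRetrieval.
Variable R : realType.

Lemma collinear_Re_line (e : R[i]) (r : R) (c1 c2 c3 : R[i]) : e != 0 ->
  complex.Re (e^* * c1) = r -> complex.Re (e^* * c2) = r ->
  complex.Re (e^* * c3) = r -> collinear c1 c2 c3.
Proof.
move=> ne0 h1 h2 h3; set n := complex.Re e ^+ 2 + complex.Im e ^+ 2.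
pose t c := complex.Im (e^* * c) / n.
have decomp c : complex.Re (e^* * c) = r -> c = (r / n)%:C * e + (t c)%:C * ('i * e).
  by move=> <-; exact: complex_line_decomp.
exists ((r / n)%:C * e), ('i * e), (t c1), (t c2), (t c3).
split; first by rewrite mulf_neq0 // eq_complex /= oner_eq0 andbF.
by split; [|split]; apply: decomp.
Qed.

Lemma equidistant_collinear (u v c1 c2 c3 : R[i]) : u != v ->
  `|u + c1| = `|v + c1| -> `|u + c2| = `|v + c2| -> `|u + c3| = `|v + c3| ->
  collinear c1 c2 c3.
Proof.
rewrite -subr_eq0 => ne0 /eq_normcD_Re h1 /eq_normcD_Re h2 /eq_normcD_Re h3.
exact: collinear_Re_line ne0 h1 h2 h3.
Qed.

Lemma affine_measE m d (A : 'M[R[i]]_(m, d)) (b : 'cV_m) (x : 'cV_d) k :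
  affine_meas A b x k 0 = `|(map_mx conjc A *m x) k 0 + b k 0|.
Proof. by rewrite !mxE; congr (`|_ + _|); apply: eq_bigr => i _; rewrite !mxE. Qed.

Lemma affine_meas_reflect m d (A : 'M[R[i]]_(m, d)) (b : 'cV_m) (z w : 'cV_d) :
  (forall j, complex.Re (((map_mx conjc A *m z + b) j 0)^*
                           * (map_mx conjc A *m w) j 0) = 0) ->
  affine_meas A b (z + w) = affine_meas A b (z - w).
Proof.
move=> orth; apply/matrixP => j l; rewrite (ord1 l) !affine_measE.
move: (orth j); rewrite mulmxDr mulmxBr; set u := _ *m z; set v := _ *m w.
by move/normcD_eq_normcB; rewrite !mxE addrAC [in RHS]addrAC.
Qed.

Lemma affine_phase_retrievable_reflect m d (A : 'M[R[i]]_(m, d)) (b : 'cV_m)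
    (z w : 'cV_d) :
  affine_phase_retrievable A b ->
  (forall j, complex.Re (((map_mx conjc A *m z + b) j 0)^*
                           * (map_mx conjc A *m w) j 0) = 0) ->
  w = 0.
Proof.
move=> inj /affine_meas_reflect/inj/addrI wNw.
have : 2%:R *: w = 0 by rewrite scaler_nat mulr2n {1}wNw addNr.
by move/eqP; rewrite scaler_eq0 pnatr_eq0 => /eqP.
Qed.
Lemma affine_phase_retrievable_card m d (A : 'M[R[i]]_(m, d)) (b : 'cV_m) :
  affine_phase_retrievable A b -> (3 * d <= m)%N.
Proof.
move=> inj; rewrite leqNgt; apply/negP => ltm; set Ac := map_mx conjc A.
suff [z [w w0 orth]] : exists z, exists2 w : 'cV_d, w != 0 &
    forall j, complex.Re (((Ac *m z + b) j 0)^* * (Ac *m w) j 0) = 0.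
  by move/eqP: w0; apply; apply: affine_phase_retrievable_reflect inj orth.
have [full|/not_row_full_ker[w w0 Aw0]] := boolP (row_full Ac); last first.
  by exists 0, w => // j; rewrite Aw0 !mxE mulr0.
have [z zf] := affine_root_of_row_full b full.
pose C : 'M_(m, d) := \matrix_(j, k) (((Ac *m z + b) j 0)^* * Ac j k).
have Cf0 k l : C (fullrankfun full k) l = 0 by rewrite mxE zf rmorph0 mul0r.
have [w w0 orth] := exists_Re_mulmx_eq0 (@fullrankfun_inj _ _ _ _ full) Cf0 ltm.
exists z, w => // j; rewrite -(orth j) [(C *m w) j 0]mxE [(Ac *m w) j 0]mxE.
rewrite mulr_sumr; congr (complex.Re _).
by apply: eq_bigr => k _; rewrite [C j k]mxE mulrA.
Qed.

Lemma stacked_affine_phase_retrievable d (B : 'M[R[i]]_d) (b1 b2 b3 : 'cV_d) :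
  B \in unitmx ->
  (forall j, ~ collinear (b1 j 0) (b2 j 0) (b3 j 0)) ->
  affine_phase_retrievable (col_mx B^T (col_mx B^T B^T)) (col_mx b1 (col_mx b2 b3)).
Proof.
move=> uB ncol x y /matrixP xy; set L := map_mx conjc B^T.
have Lxy : L *m x = L *m y.
  apply/matrixP => k l; rewrite (ord1 l).
  have := xy (rshift d (rshift d k)) 0; have := xy (rshift d (lshift d k)) 0.
  have := xy (lshift (d + d) k) 0.
  rewrite !affine_measE !map_col_mx !mul_col_mx !col_mxEu !col_mxEd !col_mxEu.
  have [//|ne h1 h2 h3] := eqVneq ((L *m x) k 0) ((L *m y) k 0).
  by case: (ncol k); apply: equidistant_collinear ne h1 h2 h3.
have uL : L \in unitmx by rewrite map_unitmx unitmx_tr.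
by rewrite -(mulKmx uL x) Lxy mulKmx.
Qed.
End AffinePhaseRetrieval.

Theorem theorem3p3 :
  (forall (R : realType) (m d : nat) (A : 'M[R[i]]_(m, d)) (b : 'cV[R[i]]_m),
      affine_phase_retrievable A b -> (3 * d <= m)%N) /\
  (forall (R : realType) (d : nat) (B : 'M[R[i]]_d) (b1 b2 b3 : 'cV[R[i]]_d),
      B \in unitmx ->
      (forall j : 'I_d, ~ collinear (b1 j ord0) (b2 j ord0) (b3 j ord0)) ->
      affine_phase_retrievable (col_mx B^T (col_mx B^T B^T))
                               (col_mx b1 (col_mx b2 b3))).
Proof.
split=> R.
- exact: affine_phase_retrievable_card.
- exact: stacked_affine_phase_retrievable.
Qed.
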